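(* Let $k\ge3$, let $G$ be a graph and $L$ a $k$-list assignment for $G$. Let $B$ be a bug in $G$ whose root $r$ has $d_G(r)=2$, and write $n=|V(G)|$. Then $B$ is safe in $G$ if at least one of the following holds: (i) there is no edge between $V(B)$ and $V(G)\setminus V(B)$; (ii) $3\le|V(B)|\le k$; (iii) $|V(B)|\ge5$; (iv) $|V(B)|=1$ and $n\not\equiv 0\pmod k$ and $n\not\equiv -1\pmod k$; (v) $|V(B)|=2$ and $n\not\equiv 0\pmod k$ and $n\not\equiv 1\pmod k$; (vi) $|V(B)|=4$, $k=3$ and $n\not\equiv0\pmod 3$.
   Context: $V_{3^+}(G)$ is the set of vertices of degree at least $3$ in $G$. A bug in $G$ is an induced connected subgraph $B$ together with a vertex $r\in V(B)$, its root, such that $V(B)\cap V_{3^+}(G)\subseteq\{r\}$. A $k$-list assignment $L$ assigns to each vertex $v$ a set $L(v)$ of exactly $k$ colors; an $L$-coloring is a proper vertex coloring $f$ with $f(v)\in L(v)$. For an integer $n$ and $k\ge1$, $n\bmod^* k$ is the unique $m\in\{1,\dots,k\}$ with $n\equiv m\pmod k$. If $|V(G)|=n\ge 1$, an $L$-coloring $f$ of $G$ is strongly equitable (SE) if every color class has at most $\lceil n/k\rceil$ vertices and the number of colors whose class has exactly $\lceil n/k\rceil$ vertices (the full classes) is at most $n\bmod^* k$; the empty graph is regarded as SE $L$-colorable. A subgraph $S\subseteq G$ is safe in $G$ if every SE $L$-coloring of $G-V(S)$ (with the restriction of $L$) can be extended to an SE $L$-coloring of $G$. *)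

From mathcomp Require Import all_boot.
Set Implicit Arguments. Unset Strict Implicit. Unset Printing Implicit Defensive.

Definition simple_graph (T : finType) (e : rel T) : Prop :=
  symmetric e /\ irreflexive e.

Definition deg (T : finType) (e : rel T) (v : T) : nat := #|[set u | e v u]|.

Definition list_assignment (T C : finType) (k : nat) (L : T -> {set C}) : Prop :=
  forall v, #|L v| = k.

Definition L_coloring (T C : finType) (e : rel T) (L : T -> {set C})
  (U : {set T}) (f : T -> C) : Prop :=
  (forall v, v \in U -> f v \in L v) /\
  (forall u v, u \in U -> v \in U -> e u v -> f u != f v).

Definition ceil_div (n k : nat) : nat := (n + k - 1) %/ k.
(* n mod* k for n >= 1: the unique m in {1..k} with n = m mod k *)
Definition modstar (n k : nat) : nat := (n - 1) %% k + 1.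

Definition color_class (T C : finType) (U : {set T}) (f : T -> C) (c : C) : {set T} :=
  [set v in U | f v == c].

Definition SE_coloring (T C : finType) (e : rel T) (k : nat) (L : T -> {set C})
  (U : {set T}) (f : T -> C) : Prop :=
  L_coloring e L U f /\
  (0 < #|U| ->
    (forall c, #|color_class U f c| <= ceil_div #|U| k) /\
    #|[set c | #|color_class U f c| == ceil_div #|U| k]| <= modstar #|U| k).

Definition safe (T C : finType) (e : rel T) (k : nat) (L : T -> {set C})
  (S : {set T}) : Prop :=
  forall f, SE_coloring e k L (~: S) f ->
    exists g, SE_coloring e k L setT g /\ forall v, v \notin S -> g v = f v.

Definition induced_connected (T : finType) (e : rel T) (S : {set T}) : Prop :=
  forall x y, x \in S -> y \in S ->
    connect [rel a b | [&& e a b, a \in S & b \in S]] x y.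

Definition bug (T : finType) (e : rel T) (S : {set T}) (r : T) : Prop :=
  [/\ r \in S, induced_connected e S &
      forall v, v \in S -> 3 <= deg e v -> v = r].

(* A bug whose root has degree 2 has maximum degree 2, so it has a spanning path
   p_0, ..., p_{s-1}.  An SE colouring of G - S is extended along this path by batches of
   at most k vertices: a batch is coloured injectively from its lists, avoiding the
   colours of its coloured neighbours and, unless the coloured part has size divisible by
   k, the colours that are already full.  Greedy colouring succeeds since a batch vertex
   has at most two coloured neighbours and only the ends of a batch can have any.  Full
   batches of k vertices preserve strong equitability, so everything hinges on the first
   s mod k vertices: they fit in one batch, or p_1, ..., p_w first fill the gap up to a
   multiple of k and p_0 is coloured with the rest, or (gap 1 and s = 1 mod k) p_1 alone
   is followed by the full batch p_0, p_2, ..., p_k.  Conditions (i)-(vi) are exactly what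
   makes the lists long enough in the remaining small cases. *)

From mathcomp Require Import all_boot zify.
Set Implicit Arguments. Unset Strict Implicit. Unset Printing Implicit Defensive.

Lemma ceil_divMDl k q r : 0 < k -> r <= k -> ceil_div (q * k + r) k = q + (0 < r).
Proof.
move=> k_gt0 r_le; rewrite /ceil_div.
have -> : q * k + r + k - 1 = q * k + (r + k - 1) by lia.
rewrite divnMDl //; congr (_ + _); case: (posnP r) => [->|r_gt0].
  by rewrite divn_small //; lia.
have -> : r + k - 1 = 1 * k + (r - 1) by lia.
by rewrite divnMDl // divn_small //; lia.
Qed.

Lemma modstarMDl k q r : 0 < r <= k -> modstar (q * k + r) k = r.
Proof.
move=> r_bd; rewrite /modstar.
have -> : q * k + r - 1 = q * k + (r - 1) by lia.
by rewrite modnMDl modn_small; lia.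
Qed.

Lemma ceil_div_modstarD N k w : 0 < k -> 0 < w -> N %% k + w <= k ->
  ceil_div (N + w) k = ceil_div N k + (N %% k == 0) /\ modstar (N + w) k = N %% k + w.
Proof.
move=> k_gt0 w_gt0 w_le; have := divn_eq N k; have := ltn_pmod N k_gt0.
move: (N %/ k) (N %% k) w_le => q r w_le r_lt ->.
rewrite -addnA !ceil_divMDl ?modstarMDl //; try lia.
Qed.

Lemma ceil_div_modstarDk N k : 0 < k ->
  ceil_div (N + k) k = (ceil_div N k).+1 /\ (0 < N -> modstar (N + k) k = modstar N k).
Proof.
move=> k_gt0; rewrite /ceil_div /modstar.
have -> : N + k + k - 1 = (N + k - 1) + 1 * k by lia.
rewrite divnDMl //; split=> [|N_gt0]; first lia.
have -> : N + k - 1 = 1 * k + (N - 1) by lia.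
by rewrite modnMDl.
Qed.

Lemma modstar_mod N k : 0 < k -> N %% k != 0 -> modstar N k = N %% k.
Proof.
by move=> k_gt0 Nk; rewrite {1}(divn_eq N k) modstarMDl // lt0n Nk ltnW // ltn_mod.
Qed.

Lemma modn_subn_eq0 n m k : 0 < k -> m <= n -> m %% k = n %% k -> (n - m) %% k = 0.
Proof. by move=> k_gt0 mn eq_mod; rewrite modnB // eq_mod ltnn mul0n add0n subnn. Qed.

Lemma modnB_small n m k : 0 < m < k -> m <= n ->
  (n - m) %% k = if m <= n %% k then n %% k - m else n %% k + k - m.
Proof.
move=> m_bd mn; rewrite modnB ?(modn_small (m := m)); try lia.
have k_gt0 : 0 < k by lia.
by have := ltn_pmod n k_gt0; case: (ltnP (n %% k) m) => /=; lia.
Qed.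

Lemma modn_neq_pred n k : 0 < k -> (n + 1) %% k != 0 -> n %% k != k.-1.
Proof.
move=> k_gt0; apply: contraNneq => r_max; rewrite -modnDml r_max addn1 prednK //.
by rewrite modnn.
Qed.

Lemma greedy_injective_choice (T C : finType) (k : nat) (L X : T -> {set C})
    (y : T -> nat) (c0 : C) (B : {set T}) :
  list_assignment k L ->
  (forall v, v \in B -> #|X v| <= y v) ->
  (forall v, v \in B -> y v + #|[set u in B | y v <= y u]| <= k) ->
  exists2 h : T -> C, (forall v, v \in B -> h v \in L v :\: X v) & {in B &, injective h}.
Proof.
move=> L_k; elim: {B}_.+1 {-2}B (ltnSn #|B|) => // m IH B B_lt X_le y_bd.
have [->|[x0 x0B]] := set_0Vmem B.
  by exists (fun _ => c0) => [v|u v]; rewrite inE.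
(* Colour last a vertex [v] of least weight: all of [B] competes with it. *)
pose v := [arg min_(u < x0 in B) y u].
have [vB v_min] : v \in B /\ forall u, u \in B -> y v <= y u.
  by rewrite /v; case: arg_minnP.
have B_gt0 : 0 < #|B| by apply/card_gt0P; exists v.
have cardB' : #|B :\ v| = #|B|.-1 by rewrite (cardsD1 v B) vB.
have [h' h'L h'_inj] : exists2 h' : T -> C,
    (forall u, u \in B :\ v -> h' u \in L u :\: X u) & {in B :\ v &, injective h'}.
  apply: IH; first by rewrite cardB'; lia.
  - by move=> u /setD1P[_ /X_le].
  - move=> u /setD1P[_ uB]; apply: leq_trans (y_bd u uB); rewrite leq_add2l.
    by apply: subset_leq_card; apply/subsetP=> w; rewrite !inE => /andP[/andP[_ ->] ->].
have yv_bd : y v + #|B| <= k.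
  have all_above : [set u in B | y v <= y u] = B.
    by apply/setP=> u; rewrite inE; case uB: (u \in B) => //=; rewrite v_min.
  by have := y_bd v vB; rewrite all_above.
have [c] : exists c, c \in L v :\: (X v :|: h' @: (B :\ v)).
  apply/card_gt0P; rewrite cardsD; have := L_k v.
  have : #|L v :&: (X v :|: h' @: (B :\ v))| <= y v + #|B :\ v|.
    apply: leq_trans (subset_leq_card (subsetIr _ _)) _.
    apply: leq_trans (leq_card_setU _ _) (leq_add (X_le v vB) (leq_imset_card _ _)).
  lia.
rewrite !inE negb_or => /andP[/andP[cX ch'] cL].
have h'_notc u : u \in B -> u != v -> h' u != c.
  by move=> uB uv; apply: contraNneq ch' => <-; rewrite imset_f // !inE uv.
exists (fun u => if u == v then c else h' u) => [u uB|u w uB wB] /=.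
  by case: eqP => [->|/eqP uv]; [rewrite !inE cX cL | apply: h'L; rewrite !inE uv].
case: eqP => [->|/eqP uv]; case: eqP => [->|/eqP wv] //.
- by move/esym/eqP; rewrite (negPf (h'_notc w wB wv)).
- by move/eqP; rewrite (negPf (h'_notc u uB uv)).
- by apply: h'_inj; rewrite !inE ?uv ?wv.
Qed.

Lemma injective_choice_by_levels (T C : finType) (k c : nat) (L X : T -> {set C})
    (m : T -> nat) (c0 : C) (B : {set T}) :
  list_assignment k L ->
  (forall v, v \in B -> m v <= 2) ->
  (forall v, v \in B -> #|X v| <= c + m v) ->
  c + #|B| <= k ->
  ([set v in B | 1 <= m v] != set0 -> c + 1 + #|[set v in B | 1 <= m v]| <= k) ->
  ([set v in B | 2 <= m v] != set0 -> c + 2 + #|[set v in B | 2 <= m v]| <= k) ->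
  exists2 h : T -> C, (forall v, v \in B -> h v \in L v :\: X v) & {in B &, injective h}.
Proof.
move=> L_k m_le X_le B_bd B1_bd B2_bd.
apply: (greedy_injective_choice (y := fun v => c + m v) c0 L_k X_le) => v vB.
have -> : [set u in B | c + m v <= c + m u] = [set u in B | m v <= m u].
  by apply/setP=> u; rewrite !inE leq_add2l.
case mv: (m v) (m_le v vB) => [|[|[|//]]] _.
- rewrite addn0; apply: leq_trans B_bd; rewrite leq_add2l.
  by apply: subset_leq_card; apply/subsetP=> u; rewrite inE => /andP[].
- by apply: B1_bd; apply/set0Pn; exists v; rewrite inE vB mv.
- by apply: B2_bd; apply/set0Pn; exists v; rewrite inE vB mv.
Qed.

Section Extension.
Variables (T C : finType) (e : rel T) (k : nat) (L : T -> {set C}) (c0 : C).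
Hypotheses (k_gt0 : 0 < k) (e_simple : simple_graph e) (L_k : list_assignment k L).

Local Notation SE := (SE_coloring e k L).

Definition deg_into (U : {set T}) (v : T) : nat := #|[set u in U | e v u]|.

Definition deg_ge (U B : {set T}) (j : nat) : {set T} := [set v in B | j <= deg_into U v].

Definition full_colors (U : {set T}) (g : T -> C) : {set C} :=
  [set c | #|color_class U g c| == ceil_div #|U| k].

Definition glue (B : {set T}) (h g : T -> C) (v : T) : C := if v \in B then h v else g v.

Lemma deg_ge_sub (U B : {set T}) j : deg_ge U B j \subset B.
Proof. by apply/subsetP=> v; rewrite inE => /andP[]. Qed.

Lemma deg_ge_subset (U B X : {set T}) j :
  (forall v, v \in B -> v \notin X -> deg_into U v < j) -> deg_ge U B j \subset X.
Proof.
move=> small; apply/subsetP=> v; rewrite inE => /andP[vB deg_v].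
by apply/negPn/negP => /(small v vB); rewrite ltnNge deg_v.
Qed.

Lemma deg_ge_eq0 (U B : {set T}) j :
  (forall v, v \in B -> deg_into U v < j) -> deg_ge U B j = set0.
Proof.
by move=> small; apply/eqP; rewrite -subset0; apply: deg_ge_subset => v /small.
Qed.

Lemma SE_card_class (U : {set T}) g c : SE U g -> #|color_class U g c| <= ceil_div #|U| k.
Proof.
move=> [_ bounds]; case: (posnP #|U|) => [U0|/bounds[-> //]].
have : color_class U g c \subset U by apply/subsetP=> x; rewrite inE => /andP[].
by move/subset_leq_card; rewrite U0 leqn0 => /eqP ->.
Qed.

Lemma SE_card_full (U : {set T}) g : 0 < #|U| -> SE U g -> #|full_colors U g| <= modstar #|U| k.
Proof. by move=> U_gt0 [_ /(_ U_gt0)[]]. Qed.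

Lemma card_class_glue (U B : {set T}) g h c : [disjoint U & B] ->
  #|color_class (U :|: B) (glue B h g) c| = #|color_class U g c| + #|color_class B h c|.
Proof.
move=> UB; rewrite -cardsUI.
have -> : color_class U g c :&: color_class B h c = set0.
  apply/setP=> x; rewrite !inE.
  by case: (boolP (x \in U)) => [/(disjointFr UB) ->|_] /=; rewrite ?andbF.
rewrite cards0 addn0; apply: eq_card => x; rewrite !inE /glue.
by case: (boolP (x \in B)) => [xB|_]; rewrite ?xB ?(disjointFl UB xB) ?orbF ?andbF.
Qed.

Lemma card_class_injective (B : {set T}) (h : T -> C) c :
  {in B &, injective h} -> #|color_class B h c| <= 1.
Proof.
move=> h_inj; apply/card_le1_eqP => x y; rewrite !inE => /andP[xB /eqP hx] /andP[yB /eqP hy].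
by apply: h_inj => //; rewrite hx hy.
Qed.

Lemma class_gt0_imset (B : {set T}) (h : T -> C) c : 0 < #|color_class B h c| -> c \in h @: B.
Proof. by case/card_gt0P=> x; rewrite inE => /andP[xB /eqP <-]; apply: imset_f. Qed.

Lemma L_coloring_glue (U B : {set T}) g h : [disjoint U & B] -> L_coloring e L U g ->
  (forall v, v \in B -> h v \in L v) -> {in B &, injective h} ->
  (forall v u, v \in B -> u \in U -> e v u -> h v != g u) ->
  L_coloring e L (U :|: B) (glue B h g).
Proof.
case: e_simple => e_sym e_irr UB [gL g_proper] hL h_inj h_nb; split.
  by move=> v; rewrite /glue inE; case: (boolP (v \in B)) => [/hL //|_]; rewrite orbF => /gL.
move=> u v; rewrite /glue !inE.
case: (boolP (u \in B)) => uB; case: (boolP (v \in B)) => vB /=; rewrite ?orbF => uU vU uv.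
- by apply: contraTneq uv => /h_inj -> //; rewrite e_irr.
- exact: h_nb.
- by rewrite eq_sym; apply: h_nb; rewrite // e_sym.
- exact: g_proper.
Qed.

Lemma deg_into_split (U : {set T}) v : deg_into U v + deg_into (~: U) v = deg e v.
Proof.
rewrite /deg_into /deg -(cardsID U [set u | e v u]); congr (_ + _); apply: eq_card => u.
  by rewrite !inE andbC.
by rewrite !inE andbC.
Qed.

Definition SE_extendable (U V : {set T}) : Prop :=
  forall g, SE U g -> exists2 g', SE V g' & {in U, g' =1 g}.

Lemma SE_extendable_trans (U V W : {set T}) : U \subset V ->
  SE_extendable U V -> SE_extendable V W -> SE_extendable U W.
Proof.
move=> /subsetP UV UV_ext VW_ext g /UV_ext[g1 /VW_ext[g2 g2SE g2_g1] g1_g].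
by exists g2 => // u uU; rewrite g2_g1 ?g1_g ?UV.
Qed.

Lemma SE_extendable_refl (U : {set T}) : SE_extendable U U.
Proof. by move=> g gSE; exists g. Qed.

Lemma SE_extendable_safe (S : {set T}) : SE_extendable (~: S) setT -> safe e k L S.
Proof. by move=> ext f /ext[g gSE g_f]; exists g; split=> // v vS; apply: g_f; rewrite inE. Qed.

Lemma SE_extend_batch (U B : {set T}) :
  [disjoint U & B] -> (forall v, v \in B -> deg_into U v <= 2) ->
  0 < #|B| -> #|U| %% k + #|B| <= k ->
  (deg_ge U B 1 != set0 -> #|U| %% k + 1 + #|deg_ge U B 1| <= k) ->
  (deg_ge U B 2 != set0 -> #|U| %% k + 2 + #|deg_ge U B 2| <= k) ->
  SE_extendable U (U :|: B).
Proof.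
move=> UB deg_le2 B_gt0 B_le B1_bd B2_bd g gSE; set r := #|U| %% k in B_le B1_bd B2_bd.
(* When [|U|] is a multiple of [k] every colour may still grow; otherwise the full
   colours are forbidden. *)
pose F := if r == 0 then set0 else full_colors U g.
have F_le : #|F| <= r.
  rewrite /F; case: eqP => [_|/eqP r_neq0]; first by rewrite cards0.
  have U_gt0 : 0 < #|U| by rewrite lt0n; apply: contra r_neq0 => /eqP U0; rewrite /r U0 mod0n.
  by rewrite /r -(modstar_mod k_gt0 r_neq0); apply: SE_card_full.
pose X v := g @: [set u in U | e v u] :|: F.
have [h hL h_inj] : exists2 h : T -> C,
    (forall v, v \in B -> h v \in L v :\: X v) & {in B &, injective h}.
  apply: (injective_choice_by_levels (c := r) (m := deg_into U) c0 L_k deg_le2) => // v vB.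
  apply: leq_trans (leq_card_setU _ _) _; rewrite addnC leq_add //.
  exact: leq_imset_card.
have hX v : v \in B -> h v \notin X v by move/hL; rewrite inE => /andP[].
exists (glue B h g) => [|u uU]; last by rewrite /glue (disjointFr UB uU).
split=> [|_].
  apply: L_coloring_glue => //; first by case: gSE.
  - by move=> v /hL /setDP[].
  - move=> v u vB uU vu; apply: contraNneq (hX v vB) => ->.
    by rewrite inE imset_f // inE uU vu.
have [ceil_UB modstar_UB] := ceil_div_modstarD k_gt0 B_gt0 B_le.
rewrite cardsU (disjoint_setI0 UB) cards0 subn0 ceil_UB modstar_UB.
have full_UB c : #|color_class U g c| + #|color_class B h c| >= ceil_div #|U| k + (r == 0) ->
    c \in F :|: h @: B.
  move=> c_full; rewrite inE.
  case: (posnP #|color_class B h c|) => [c0B|/class_gt0_imset ->]; last by rewrite orbT.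
  have := SE_card_class c gSE; move: c_full; rewrite c0B addn0 /F.
  by case: eqP => _ /=; rewrite ?inE; lia.
split=> [c|].
  rewrite card_class_glue //; have := SE_card_class c gSE.
  have := card_class_injective c h_inj; case: eqP => [_|/eqP r_neq0]; first lia.
  case: (posnP #|color_class B h c|) => [-> _|/class_gt0_imset/imsetP[v vB ->]]; first lia.
  have : h v \notin F by apply: contra (hX v vB); rewrite inE orbC => ->.
  by rewrite /F (negPf r_neq0) inE => /eqP; lia.
apply: (leq_trans (subset_leq_card (_ : _ \subset F :|: h @: B))).
  apply/subsetP=> c; rewrite inE card_class_glue // => /eqP c_full.
  by apply: full_UB; rewrite c_full.
apply: leq_trans (leq_card_setU _ _) _.
exact: leq_add F_le (leq_imset_card _ _).
Qed.

Lemma SE_extend_full_batch (U B : {set T}) :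
  [disjoint U & B] -> (forall v, v \in B -> deg_into U v <= 2) -> #|B| = k ->
  (deg_ge U B 1 != set0 -> 1 + #|deg_ge U B 1| <= k) ->
  (deg_ge U B 2 != set0 -> 2 + #|deg_ge U B 2| <= k) ->
  SE_extendable U (U :|: B).
Proof.
move=> UB deg_le2 B_k B1_bd B2_bd g gSE.
pose X v := g @: [set u in U | e v u].
have [h hL h_inj] : exists2 h : T -> C,
    (forall v, v \in B -> h v \in L v :\: X v) & {in B &, injective h}.
  apply: (injective_choice_by_levels (c := 0) (m := deg_into U) c0 L_k deg_le2) => //.
    by move=> v _; apply: leq_imset_card.
  by rewrite B_k.
exists (glue B h g) => [|u uU]; last by rewrite /glue (disjointFr UB uU).
split=> [|_].
  apply: L_coloring_glue => //; first by case: gSE.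
  - by move=> v /hL /setDP[].
  - move=> v u vB uU vu; have /setDP[_] := hL v vB.
    by apply: contraNneq => ->; rewrite imset_f // inE uU vu.
have [ceil_UB modstar_UB] := ceil_div_modstarDk #|U| k_gt0.
rewrite cardsU (disjoint_setI0 UB) cards0 subn0 B_k ceil_UB.
have class_le c : #|color_class U g c| + #|color_class B h c| <= (ceil_div #|U| k).+1.
  by have := SE_card_class c gSE; have := card_class_injective c h_inj; lia.
split=> [c|]; first by rewrite card_class_glue.
case: (posnP #|U|) => [U0|U_gt0].
  rewrite U0 add0n /modstar modn_small; last lia.
  rewrite subnK // -B_k; apply: leq_trans (leq_imset_card h B).
  apply: subset_leq_card; apply/subsetP=> c; rewrite inE card_class_glue // => /eqP c_full.
  apply: class_gt0_imset; have := SE_card_class c gSE.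
  by rewrite U0 /ceil_div add0n divn_small; lia.
rewrite modstar_UB //; apply: leq_trans (SE_card_full U_gt0 gSE).
apply: subset_leq_card; apply/subsetP=> c; rewrite !inE card_class_glue // => /eqP c_full.
by have := SE_card_class c gSE; have := card_class_injective c h_inj; lia.
Qed.

End Extension.

Lemma connect_exit (T : finType) (R : rel T) (A : pred T) a b :
  connect R a b -> a \in A -> b \notin A -> exists u z, [/\ u \in A, z \notin A & R u z].
Proof.
case/connectP=> q; elim: q a => [|c q IH] a /=; first by move=> _ -> ->.
case/andP=> ac cq b_last aA; case: (boolP (c \in A)) => [cA|cNA]; first exact: IH cq b_last cA.
by exists a, c.
Qed.

Section BugPath.
Variables (T : finType) (e : rel T) (S : {set T}).
Hypotheses (e_sym : symmetric e) (deg_le2 : forall v, v \in S -> deg e v <= 2).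

Definition S_path (t : seq T) : bool := [&& uniq t, all [in S] t & sorted e t].

Lemma three_nbrs_deg v a b c :
  e v a -> e v b -> e v c -> a != b -> a != c -> b != c -> 3 <= deg e v.
Proof.
move=> va vb vc ab ac bc; apply: (@leq_trans #|a |: [set b; c]|).
  by rewrite cardsU1 cards2 !inE negb_or ab ac bc.
by apply: subset_leq_card; apply/subsetP=> x; rewrite !inE => /or3P[] /eqP ->.
Qed.

Lemma S_path_grow t u z : S_path t -> u \in t -> z \in S -> z \notin t -> e u z ->
  exists2 t', S_path t' & size t' = (size t).+1.
Proof.
case/and3P=> t_uniq t_S t_sorted ut zS zt uz.
have [a [t1 def_t]] : exists a t1, t = a :: t1.
  by case: t ut {t_uniq t_S t_sorted zt} => // a t1; exists a, t1.
set i := index u t; have i_lt : i < size t by rewrite index_mem.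
have t_i : nth a t i = u by rewrite nth_index.
case: (posnP i) => [i0|i_gt0].
  exists (z :: t) => //; rewrite /S_path /= zt t_uniq zS t_S /=.
  by move: t_sorted t_i; rewrite def_t i0 /= => -> ->; rewrite e_sym uz.
case: (eqVneq i (size t).-1) => [i_last|i_mid].
  exists (rcons t z); last by rewrite size_rcons.
  rewrite /S_path rcons_uniq zt t_uniq all_rcons zS t_S /=.
  move: t_sorted t_i; rewrite i_last def_t /= rcons_path => -> /=.
  by rewrite (last_nth a) /= => ->.
have [i_prev i_next] : i.-1 < size t /\ i.+1 < size t by lia.
have /(sortedP a) adj := t_sorted.
have nb_prev : e u (nth a t i.-1).
  by rewrite -t_i e_sym; have := adj i.-1; rewrite prednK //; apply.
have nb_next : e u (nth a t i.+1) by rewrite -t_i; apply: adj.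
have nth_t j : j < size t -> nth a t j != z.
  by move=> j_lt; apply: contraNneq zt => <-; rewrite mem_nth.
have prev_next : nth a t i.-1 != nth a t i.+1 by rewrite nth_uniq //; lia.
have := three_nbrs_deg nb_prev nb_next uz prev_next (nth_t _ i_prev) (nth_t _ i_next).
by rewrite leqNgt ltnS deg_le2 // (allP t_S).
Qed.

Lemma induced_path_spanning x : induced_connected e S -> x \in S ->
  exists p, [/\ uniq p, p =i S & sorted e p].
Proof.
move=> S_conn xS; pose has_path n := [exists t : n.-tuple T, S_path t].
have path1 : has_path 1 by apply/existsP; exists [tuple x]; rewrite /S_path /= xS.
have path_le n : has_path n -> n <= #|T|.
  by case/existsP=> t /and3P[t_uniq _ _]; rewrite -(size_tuple t) -(card_uniqP t_uniq) max_card.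
case: (ex_maxnP (ex_intro _ 1 path1) path_le) => M /existsP[t t_path] t_max.
have {}t_max t' : S_path t' -> size t' <= M.
  by move=> t'_path; apply: t_max; apply/existsP; exists (in_tuple t').
have M_gt0 : 0 < M by have := t_max [:: x]; rewrite /S_path /= xS; apply.
case/and3P: (t_path) => t_uniq /allP t_S t_sorted.
exists t; split=> // y; apply/idP/idP => [/t_S //|yS]; apply/negPn/negP => yt.
have t0 : nth x t 0 \in t by rewrite mem_nth // size_tuple.
have [u [z [ut zt /and3P[uz _ zS]]]] := connect_exit (S_conn _ _ (t_S _ t0) yS) t0 yt.
have [t' t'_path] := S_path_grow t_path ut zS zt uz.
by move=> size_t'; have := t_max _ t'_path; rewrite size_t' size_tuple ltnn.
Qed.

End BugPath.

Section Bug.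
Variables (T : finType) (e : rel T) (S : {set T}) (r : T).
Hypotheses (e_simple : simple_graph e) (S_bug : bug e S r) (deg_r : deg e r = 2).

Lemma bug_deg_le2 v : v \in S -> deg e v <= 2.
Proof.
case: S_bug => _ _ deg3_root vS; rewrite leqNgt; apply/negP => deg3.
by have := deg3; rewrite (deg3_root v vS deg3) deg_r.
Qed.

Lemma bug_small_attached : #|S| <= 2 -> exists x y, [/\ x \in S, y \notin S & e x y].
Proof.
case: S_bug => rS _ _ S_le2; exists r.
have : ~~ ([set u | e r u] \subset S :\ r).
  apply/negP => /subset_leq_card; rewrite [X in X <= _]deg_r.
  by have := cardsD1 r S; rewrite rS; lia.
case/subsetPn=> u; rewrite !inE negb_and negbK => ru /orP[/eqP ur|uS]; last by exists u.
by case: e_simple => _ e_irr; move: ru; rewrite ur e_irr.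
Qed.

End Bug.

Section PathExtension.
Variables (T C : finType) (e : rel T) (k : nat) (L : T -> {set C}) (c0 : C).
Variables (S : {set T}) (p : seq T) (x0 : T).
Hypotheses (k_ge3 : 3 <= k) (e_simple : simple_graph e) (L_k : list_assignment k L).
Hypotheses (p_uniq : uniq p) (p_S : p =i S) (p_sorted : sorted e p).
Hypothesis deg_le2 : forall v, v \in S -> deg e v <= 2.

Definition pv (i : nat) : T := nth x0 p i.

Definition segment (a b : nat) : {set T} := [set x in S | a <= index x p < b].

Definition cover (a b : nat) : {set T} := ~: S :|: segment a b.

Lemma size_path : size p = #|S|.
Proof. by rewrite -(card_uniqP p_uniq); apply: eq_card. Qed.

Lemma pv_in i : i < size p -> pv i \in S.
Proof. by move=> i_lt; rewrite -p_S mem_nth. Qed.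

Lemma index_pv i : i < size p -> index (pv i) p = i.
Proof. by move=> i_lt; rewrite index_uniq. Qed.

Lemma pv_inj i j : i < size p -> j < size p -> pv i = pv j -> i = j.
Proof. by move=> i_lt j_lt eq_ij; rewrite -(index_pv i_lt) -(index_pv j_lt) eq_ij. Qed.

Lemma pv_segment a b i : i < size p -> (pv i \in segment a b) = (a <= i < b).
Proof. by move=> i_lt; rewrite inE pv_in // index_pv. Qed.

Lemma segmentP a b x : x \in segment a b -> exists2 i, a <= i < b & i < size p /\ x = pv i.
Proof.
rewrite inE => /andP[xS ab]; exists (index x p) => //.
by rewrite index_mem p_S /pv nth_index ?p_S.
Qed.

Lemma card_segment a b : b <= size p -> #|segment a b| = b - a.
Proof.
move=> b_le; rewrite -(size_iota a (b - a)) -(size_map pv).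
rewrite -(card_uniqP _); last first.
  rewrite map_inj_in_uniq ?iota_uniq // => i j.
  by rewrite !mem_iota => /andP[? ?] /andP[? ?]; apply: pv_inj; lia.
apply: eq_card => x; apply/idP/mapP => [/segmentP[i ab [_ ->]]|[i]].
  by exists i; rewrite // mem_iota; lia.
by rewrite mem_iota => ab ->; rewrite pv_segment; lia.
Qed.

Lemma pv_cover a b i : i < size p -> (pv i \in cover a b) = (a <= i < b).
Proof. by move=> i_lt; rewrite inE pv_segment // inE pv_in. Qed.

Lemma card_cover a b : b <= size p -> #|cover a b| = #|T| - #|S| + (b - a).
Proof.
move=> b_le; rewrite cardsU cardsCs setCK card_segment //.
suff -> : ~: S :&: segment a b = set0 by rewrite cards0 subn0.
by apply/setP=> x; rewrite !inE; case: (x \in S).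
Qed.

Lemma cover_nil a : cover a a = ~: S.
Proof. by apply/setP=> x; rewrite !inE; case: (x \in S) => //=; lia. Qed.

Lemma cover_all : cover 0 (size p) = setT.
Proof. by apply/setP=> x; rewrite !inE orbC index_mem p_S; case: (x \in S). Qed.

Lemma cover_sub a b a' b' : a' <= a -> b <= b' -> cover a b \subset cover a' b'.
Proof. by move=> aa bb; apply/subsetP=> x; rewrite !inE; case: (x \in S) => //=; lia. Qed.

Lemma cover_segment a b c : a <= b <= c -> cover a b :|: segment b c = cover a c.
Proof. by move=> abc; apply/setP=> x; rewrite !inE; case: (x \in S) => //=; lia. Qed.

Lemma disjoint_cover_segment a b c : [disjoint cover a b & segment b c].
Proof. by rewrite -setI_eq0; apply/eqP/setP=> x; rewrite !inE; case: (x \in S) => //=; lia. Qed.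

Lemma card_pv0_segment a b : 0 < a <= b -> b <= size p -> #|pv 0 |: segment a b| = (b - a).+1.
Proof. by move=> ab b_le; rewrite cardsU1 pv_segment ?card_segment; lia. Qed.

Lemma disjoint_cover_pv0_segment a b : 0 < a -> 0 < size p ->
  [disjoint cover 1 a & pv 0 |: segment a b].
Proof.
move=> a_gt0 p_gt0; rewrite -setI_eq0 setIUr setU_eq0 !setI_eq0 disjoint_cover_segment.
by rewrite disjoint_sym disjoints1 pv_cover.
Qed.

Lemma cover_pv0_segment a b : 0 < a <= b -> b <= size p ->
  cover 1 a :|: (pv 0 |: segment a b) = cover 0 b.
Proof.
move=> ab b_le; apply/setP=> x; rewrite !inE; case xS: (x \in S) => //=.
have x_pv : x = pv (index x p) by rewrite /pv nth_index // p_S.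
have -> : (x == pv 0) = (index x p == 0).
  apply/eqP/eqP => [x0_pv|i0]; last by rewrite x_pv i0.
  by rewrite x0_pv index_pv //; lia.
lia.
Qed.


Local Notation SE_extendable := (SE_extendable e k L).
Local Notation deg_into := (deg_into e).
Local Notation deg_ge := (deg_ge e).

Let k_gt0 : 0 < k. Proof. lia. Qed.

Lemma pv_adj i : i.+1 < size p -> e (pv i) (pv i.+1).
Proof. exact: (sortedP x0 p_sorted). Qed.

Lemma pv_adj_prev i : 0 < i < size p -> e (pv i) (pv i.-1).
Proof.
case/andP=> i_gt0 i_lt; case: e_simple => e_sym _; rewrite e_sym.
by have := @pv_adj i.-1; rewrite prednK //; apply.
Qed.

Lemma deg_into_pv_le2 (U : {set T}) i : i < size p -> deg_into U (pv i) <= 2.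
Proof.
by move=> i_lt; have := deg_le2 (pv_in i_lt); rewrite -(deg_into_split e U); lia.
Qed.

Lemma deg_into_pv_le1 (U : {set T}) i j : i < size p -> e (pv i) (pv j) -> pv j \notin U ->
  deg_into U (pv i) <= 1.
Proof.
move=> i_lt ij jU; have := deg_le2 (pv_in i_lt); rewrite -(deg_into_split e U).
suff : 0 < deg_into (~: U) (pv i) by lia.
by apply/card_gt0P; exists (pv j); rewrite !inE jU.
Qed.

Lemma deg_into_pv_inner (U : {set T}) i : 0 < i -> i.+1 < size p ->
  pv i.-1 \notin U -> pv i.+1 \notin U -> deg_into U (pv i) = 0.
Proof.
move=> i_gt0 i_lt prevU nextU; have := deg_le2 (pv_in (ltnW i_lt)).
rewrite -(deg_into_split e U); suff : 1 < deg_into (~: U) (pv i) by lia.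
have prev_next : pv i.-1 != pv i.+1.
  by apply: contraTneq isT => /pv_inj eq; have := eq ltac:(lia) i_lt; lia.
apply: leq_trans (_ : #|[set pv i.-1; pv i.+1]| <= _); first by rewrite cards2 prev_next.
apply: subset_leq_card; apply/subsetP=> u; rewrite !inE => /orP[] /eqP ->.
  by rewrite prevU pv_adj_prev //; lia.
by rewrite nextU pv_adj.
Qed.

Lemma pv_notin_cover a b i : i < size p -> (i < a) || (b <= i) -> pv i \notin cover a b.
Proof. by move=> i_lt i_out; rewrite pv_cover //; lia. Qed.

Lemma deg_into_segment_le2 (U : {set T}) a b v : v \in segment a b -> deg_into U v <= 2.
Proof. by case/segmentP=> i _ [i_lt ->]; apply: deg_into_pv_le2. Qed.

Lemma SE_extend_cover_segment a b c : a <= b < c -> c <= size p ->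
  #|cover a b| %% k + (c - b) <= k ->
  (deg_ge (cover a b) (segment b c) 1 != set0 ->
     #|cover a b| %% k + 1 + #|deg_ge (cover a b) (segment b c) 1| <= k) ->
  (deg_ge (cover a b) (segment b c) 2 != set0 ->
     #|cover a b| %% k + 2 + #|deg_ge (cover a b) (segment b c) 2| <= k) ->
  SE_extendable (cover a b) (cover a c).
Proof.
move=> abc c_le c_bd B1_bd B2_bd; rewrite -(cover_segment (b := b) (c := c)); last lia.
apply: (SE_extend_batch c0 k_gt0 e_simple L_k) => //.
- exact: disjoint_cover_segment.
- exact: deg_into_segment_le2.
- by rewrite card_segment //; lia.
- by rewrite card_segment.
Qed.

Lemma SE_extend_full_segment j : j + k <= size p -> SE_extendable (cover 0 j) (cover 0 (j + k)).
Proof.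
move=> jk; rewrite -(cover_segment (b := j) (c := j + k)); last lia.
apply: (SE_extend_full_batch c0 k_gt0 e_simple L_k) => //.
- exact: disjoint_cover_segment.
- exact: deg_into_segment_le2.
- by rewrite card_segment //; lia.
- have : #|deg_ge (cover 0 j) (segment j (j + k)) 1| <= #|[set pv j; pv (j + k).-1]|.
    apply/subset_leq_card/deg_ge_subset => v /segmentP[i ji [i_lt ->]].
    rewrite !inE negb_or => /andP[ij ijk].
    have [i_ne_j i_ne_jk] : i != j /\ i != (j + k).-1.
      by split; [apply: contraNneq ij => -> | apply: contraNneq ijk => ->].
    by rewrite deg_into_pv_inner //; try apply: pv_notin_cover; lia.
  by rewrite cards2; lia.
- rewrite deg_ge_eq0 ?eqxx // => v /segmentP[i ji [i_lt ->]].
  case: (ltnP i.+1 (j + k)) => i_bd.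
    by apply: (deg_into_pv_le1 (j := i.+1)); [|apply: pv_adj|apply: pv_notin_cover]; lia.
  by apply: (deg_into_pv_le1 (j := i.-1)); [|apply: pv_adj_prev|apply: pv_notin_cover]; lia.
Qed.

Lemma SE_extend_blocks j : j <= size p -> (size p - j) %% k = 0 -> SE_extendable (cover 0 j) setT.
Proof.
move=> j_le dvd_k; rewrite -cover_all.
have [m def_s] : exists m, size p = j + m * k.
  by have := divn_eq (size p - j) k; rewrite dvd_k addn0; move: (_ %/ _) => m ?; exists m; lia.
elim: m j j_le {dvd_k} def_s => [|m IH] j j_le def_s.
  by rewrite def_s mul0n addn0; apply: SE_extendable_refl.
rewrite mulSn in def_s; apply: (SE_extendable_trans (cover_sub (leqnn 0) (leq_addr k j))).
  by apply: SE_extend_full_segment; lia.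
by apply: IH; lia.
Qed.

Lemma deg_into_outside_le1 i : 1 < size p -> i < size p -> deg_into (~: S) (pv i) <= 1.
Proof.
move=> p_gt1 i_lt.
have notin j : j < size p -> pv j \notin ~: S by move=> j_lt; rewrite inE negbK pv_in.
case: (ltnP i.+1 (size p)) => i_bd.
  by apply: (deg_into_pv_le1 (j := i.+1)); [|apply: pv_adj|apply: notin].
by apply: (deg_into_pv_le1 (j := i.-1)); [|apply: pv_adj_prev|apply: notin]; lia.
Qed.

Lemma card_deg_ge_segment (U : {set T}) a b j : b <= size p -> #|deg_ge U (segment a b) j| <= b - a.
Proof. by move=> b_le; rewrite -card_segment // subset_leq_card // deg_ge_sub. Qed.

Local Notation r0 := ((#|T| - #|S|) %% k).

Lemma SE_extend_single : size p = 1 -> r0 + 3 <= k -> SE_extendable (~: S) setT.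
Proof.
move=> s1 r0_bd; rewrite -(cover_nil 0) -cover_all s1.
have B_le j : #|deg_ge (cover 0 0) (segment 0 1) j| <= 1 by rewrite card_deg_ge_segment ?s1.
apply: SE_extend_cover_segment; rewrite ?card_cover ?s1 ?subnn ?addn0 //; try lia.
- by move=> _; have := B_le 1; lia.
- by move=> _; have := B_le 2; lia.
Qed.

Lemma SE_extend_initial_block rho : 1 < size p -> 0 < rho <= size p -> (size p - rho) %% k = 0 ->
  r0 + rho <= k -> r0 + 1 + (deg_into (~: S) (pv 0) != 0) + (rho == size p) <= k ->
  SE_extendable (~: S) setT.
Proof.
move=> p_gt1 rho_bd rho_dvd rho_le X_bd.
have rho_le_p : rho <= size p by case/andP: rho_bd.
apply: (SE_extendable_trans (V := cover 0 rho)); last exact: SE_extend_blocks.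
  by rewrite -(cover_nil 0) cover_sub.
rewrite -(cover_nil 0); apply: SE_extend_cover_segment;
  rewrite ?card_cover ?subn0 ?addn0 //; try lia.
  move=> _; rewrite cover_nil.
  pose X := (if deg_into (~: S) (pv 0) == 0 then set0 else [set pv 0]) :|:
            (if rho == size p then [set pv (size p).-1] else set0).
  have X_le : #|X| <= (deg_into (~: S) (pv 0) != 0) + (rho == size p).
    by apply: leq_trans (leq_card_setU _ _) _; apply: leq_add; case: eqP; rewrite ?cards0 ?cards1.
  suff : #|deg_ge (~: S) (segment 0 rho) 1| <= #|X| by lia.
  apply/subset_leq_card/deg_ge_subset => v /segmentP[i i_lt [_ ->]].
  rewrite !inE negb_or => /andP[not0 notlast].
  case: (posnP i) => [i0|i_gt0].
    by move: not0; rewrite i0; case: eqP => [-> //|_]; rewrite inE eqxx.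
  have i_ne : i != (size p).-1.
    apply: contraNneq notlast => i_last.
    have -> : rho == size p by apply/eqP; lia.
    by rewrite i_last inE.
  by rewrite -(cover_nil 0) deg_into_pv_inner //; try apply: pv_notin_cover; lia.
by rewrite cover_nil deg_ge_eq0 ?eqxx // => v /segmentP[i _ [i_lt ->]]; apply: deg_into_outside_le1.
Qed.

Lemma SE_extend_wrapped : 2 < size p -> 0 < size p %% k -> k < r0 + size p %% k ->
  SE_extendable (~: S) setT.
Proof.
move=> p_gt2 rho_gt0 wrap.
have r0_lt : r0 < k by rewrite ltn_mod.
have [rho def_rho] : {rho | size p %% k = rho} by exists (size p %% k).
have rho_lt : rho < k by rewrite -def_rho ltn_mod.
have rho_le : rho <= size p by rewrite -def_rho leq_mod.
rewrite def_rho in rho_gt0 wrap.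
(* First complete [G - S] to a multiple of [k] with the path vertices [1..w], then colour
   [p_0] together with the remaining vertices of the initial block. *)
set w := k - r0.
have w_bd : 0 < w < rho by lia.
apply: (SE_extendable_trans (V := cover 1 w.+1)).
- by rewrite -(cover_nil 1) cover_sub.
- rewrite -(cover_nil 1); apply: SE_extend_cover_segment;
    rewrite ?card_cover ?subnn ?addn0; try lia.
  + rewrite cover_nil => /set0Pn[v B1v].
    have B1_sub : deg_ge (~: S) (segment 1 w.+1) 1 \subset [set pv (size p).-1].
      apply: deg_ge_subset => u /segmentP[i i_bd [i_lt ->]]; rewrite inE => i_ne.
      have {}i_ne : i != (size p).-1 by apply: contraNneq i_ne => ->.
      by rewrite -(cover_nil 0) deg_into_pv_inner //; try apply: pv_notin_cover; lia.
    have /segmentP[i i_bd [i_lt def_v]] := subsetP (deg_ge_sub _ _ _ _) v B1v.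
    have := subsetP B1_sub v B1v; rewrite inE def_v => /eqP/pv_inj i_last.
    have := subset_leq_card B1_sub; rewrite cards1.
    by have := i_last i_lt ltac:(lia); lia.
  + rewrite cover_nil deg_ge_eq0 ?eqxx // => v /segmentP[i _ [i_lt ->]].
    by apply: deg_into_outside_le1; lia.
have blocks : SE_extendable (cover 0 rho) setT.
  by apply: SE_extend_blocks; rewrite // modn_subn_eq0 // -def_rho modn_mod.
apply: (SE_extendable_trans _ _ blocks); first by apply: cover_sub; lia.
have w_rho : 0 < w.+1 <= rho by lia.
rewrite -(cover_pv0_segment (b := rho) w_rho) //.
have card_B : #|pv 0 |: segment w.+1 rho| = rho - w by rewrite card_pv0_segment //; lia.
have full : #|cover 1 w.+1| %% k = 0.
  rewrite card_cover; last lia.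
  have -> : #|T| - #|S| + (w.+1 - 1) = (#|T| - #|S|) %/ k * k + k.
    by rewrite {1}(divn_eq (#|T| - #|S|) k); lia.
  by rewrite -mulSnr modnMl.
have B_le j : #|deg_ge (cover 1 w.+1) (pv 0 |: segment w.+1 rho) j| <= rho - w.
  by rewrite -card_B subset_leq_card // deg_ge_sub.
apply: (SE_extend_batch c0 k_gt0 e_simple L_k); rewrite ?full ?card_B; try lia.
- by apply: disjoint_cover_pv0_segment; lia.
- move=> v; rewrite in_setU1 => /orP[/eqP ->|/segmentP[i _ [i_lt ->]]].
    by apply: deg_into_pv_le2; lia.
  exact: deg_into_pv_le2.
- by move=> _; have := B_le 1; lia.
- by move=> _; have := B_le 2; lia.
Qed.

Lemma SE_extend_rotated : size p %% k = 1 -> r0 = k.-1 -> k < size p ->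
  (3 < k) || (k.+1 < size p) -> SE_extendable (~: S) setT.
Proof.
move=> rho1 r0_max k_lt k_cases.
(* [p_1] alone completes [G - S] to a multiple of [k]; then [p_0, p_2, ..., p_k] form
   a full block. *)
have blocks : SE_extendable (cover 0 k.+1) setT.
  by apply: SE_extend_blocks; rewrite // modn_subn_eq0 // rho1 -addn1 modnDl modn_small; lia.
apply: (SE_extendable_trans _ _ blocks); first by rewrite -(cover_nil 1) cover_sub.
apply: (SE_extendable_trans (V := cover 1 2)); first by rewrite -(cover_nil 1) cover_sub.
  rewrite -(cover_nil 1); apply: SE_extend_cover_segment;
    rewrite ?card_cover ?subnn ?addn0 ?r0_max //; try lia.
    rewrite deg_ge_eq0 ?eqxx // => v /segmentP[i i_bd [_ ->]].
    by rewrite (_ : i = 1) ?deg_into_pv_inner //; try apply: pv_notin_cover; lia.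
  rewrite deg_ge_eq0 ?eqxx // => v /segmentP[i _ [i_lt ->]].
  by rewrite cover_nil; apply: deg_into_outside_le1; lia.
have k1_le : 0 < 2 <= k.+1 by lia.
rewrite -(cover_pv0_segment k1_le) //.
have outside i : 2 <= i < size p -> pv i \notin cover 1 2.
  by move=> i_bd; apply: pv_notin_cover; lia.
apply: (SE_extend_full_batch c0 k_gt0 e_simple L_k).
- by apply: disjoint_cover_pv0_segment; lia.
- move=> v; rewrite in_setU1 => /orP[/eqP ->|/segmentP[i _ [i_lt ->]]].
    by apply: deg_into_pv_le2; lia.
  exact: deg_into_pv_le2.
- by rewrite card_pv0_segment //; lia.
- move=> _; pose X := pv 0 |: (pv 2 |: (if k.+1 < size p then set0 else [set pv k])).
  have X_le : #|X| <= 2 + (size p <= k.+1).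
    apply: leq_trans (leq_card_setU _ _) _; rewrite cards1 -add1n leq_add2l.
    apply: leq_trans (leq_card_setU _ _) _; rewrite cards1 -add1n leq_add2l.
    by case: ltnP; rewrite ?cards0 ?cards1.
  suff : #|deg_ge (cover 1 2) (pv 0 |: segment 2 k.+1) 1| <= #|X| by move: k_cases; lia.
  apply/subset_leq_card/deg_ge_subset => v.
  rewrite in_setU1 => /orP[/eqP ->|]; first by rewrite !inE eqxx.
  case/segmentP=> i i_bd [i_lt ->]; rewrite !in_setU1 => /norP[_ /norP[not2 notk]].
  have i_ne2 : i != 2 by apply: contraNneq not2 => ->.
  have i_nek : (k.+1 < size p) || (i != k).
    by case: ltnP notk => // _; rewrite inE; apply: contraNneq => ->.
  by rewrite deg_into_pv_inner //; try apply: outside; lia.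
- move=> _; suff : #|deg_ge (cover 1 2) (pv 0 |: segment 2 k.+1) 2| <= #|[set pv 0]|.
    by rewrite cards1; lia.
  apply/subset_leq_card/deg_ge_subset => v.
  rewrite in_setU1 => /orP[/eqP ->|]; first by rewrite inE eqxx.
  case/segmentP=> i i_bd [i_lt ->] _; case: (eqVneq i 2) => [->|i_ne2].
    by apply: (deg_into_pv_le1 (j := 3)); [|apply: pv_adj|apply: outside]; lia.
  by apply: (deg_into_pv_le1 (j := i.-1)); [|apply: pv_adj_prev|apply: outside]; lia.
Qed.

Lemma SE_extend_along_path : 0 < size p -> (size p <= 2 -> r0 + 3 <= k) ->
  (size p %% k = 1 -> r0 = k.-1 -> deg_into (~: S) (pv 0) != 0 -> (3 < k) || (k.+1 < size p)) ->
  SE_extendable (~: S) setT.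
Proof.
move=> p_gt0 small_bd rotate_ok.
have r0_lt : r0 < k by rewrite ltn_mod.
have rho_lt : size p %% k < k by rewrite ltn_mod.
have rho_le : size p %% k <= size p by rewrite leq_mod.
have rho_dvd : (size p - size p %% k) %% k = 0 by rewrite modn_subn_eq0 ?modn_mod.
case: (posnP (size p %% k)) => [rho0|rho_gt0].
  by rewrite -(cover_nil 0); apply: SE_extend_blocks; rewrite ?subn0.
have [p1|p_gt1] := leqP (size p) 1.
  by apply: SE_extend_single; [lia | apply: small_bd; lia].
have [wrap|no_wrap] := ltnP k (r0 + size p %% k).
  apply: SE_extend_wrapped => //; rewrite ltnNge; apply/negP => p_le2.
  by have := small_bd p_le2; rewrite (@modn_small (size p)) in wrap; lia.
have [rho_p|rho_lt_p] := eqVneq (size p %% k) (size p).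
  apply: (SE_extend_initial_block (rho := size p)); rewrite ?subnn ?mod0n ?eqxx //; try lia.
have [r0_small|r0_max] := leqP (r0 + 2) k.
  by apply: (SE_extend_initial_block (rho := size p %% k)); rewrite ?(negPf rho_lt_p) //; lia.
have [alpha0|alpha] := eqVneq (deg_into (~: S) (pv 0)) 0.
  apply: (SE_extend_initial_block (rho := size p %% k));
    by rewrite ?(negPf rho_lt_p) ?alpha0 //=; lia.
have rho1 : size p %% k = 1 by lia.
have k_lt : k < size p.
  rewrite ltnNge; apply/negP; rewrite leq_eqVlt => /orP[/eqP p_k|p_lt].
    by move: rho1; rewrite p_k modnn.
  by move: rho1; rewrite modn_small //; lia.
by apply: SE_extend_rotated => //; [lia | apply: rotate_ok => //; lia].
Qed.

End PathExtension.

Lemma corollary_side_conditions (k n s : nat) (iso : Prop) :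
  3 <= k -> 0 < s <= n -> (s <= 2 -> ~ iso) ->
  iso \/ (3 <= s <= k) \/ (5 <= s) \/ [&& s == 1, n %% k != 0 & (n + 1) %% k != 0] \/
  [&& s == 2, n %% k != 0 & n %% k != 1] \/ [&& s == 4, k == 3 & n %% 3 != 0] ->
  (s <= 2 -> (n - s) %% k + 3 <= k) /\
  (s %% k = 1 -> (n - s) %% k = k.-1 -> ~ iso -> (3 < k) || (k.+1 < s)).
Proof.
move=> k_ge3 s_bd small_attached cases; have k_gt0 : 0 < k by lia.
have r_lt : n %% k < k by rewrite ltn_mod.
split=> [s_le2|rho1 r0_max attached].
  case: cases => [/(small_attached s_le2) //|[|[|[|[|]]]]]; try lia.
  - case/and3P=> /eqP s1 r_ne0 /(modn_neq_pred k_gt0) r_ne; subst s.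
    by rewrite modnB_small //; case: leqP; lia.
  - case/and3P=> /eqP s2 r_ne0 r_ne1; subst s.
    by rewrite modnB_small //; case: leqP; lia.
case: cases => [/attached[]|[s_bd'|[s_ge5|[|[|]]]]].
- move: rho1; case: (ltngtP s k) => [s_lt|k_lt|->]; last by rewrite modnn.
    by rewrite modn_small //; lia.
  by lia.
- by case: (leqP k 3) => [k3|]; rewrite ?orbT //; apply/orP; right; lia.
- case/and3P=> /eqP s1 r_ne0 _; subst s.
  by move: r0_max; rewrite modnB_small //; case: leqP; lia.
- by case/and3P=> /eqP s2; move: rho1; rewrite s2 modn_small //; lia.
- case/and3P=> /eqP s4 /eqP k3 n_mod; subst s k.
  by move: r0_max n_mod; lia.
Qed.

Unset Implicit Arguments.

Theorem corollary4p5 (T C : finType) (e : rel T) (k : nat) (L : T -> {set C})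
  (S : {set T}) (r : T) :
  3 <= k -> simple_graph e -> list_assignment k L ->
  bug e S r -> deg e r = 2 ->
  let n := #|T| in
  (forall x y, x \in S -> y \notin S -> ~~ e x y) \/
  (3 <= #|S| <= k) \/
  (5 <= #|S|) \/
  [&& #|S| == 1, n %% k != 0 & (n + 1) %% k != 0] \/
  [&& #|S| == 2, n %% k != 0 & n %% k != 1] \/
  [&& #|S| == 4, k == 3 & n %% 3 != 0] ->
  safe e k L S.
Proof.
move=> k_ge3 e_simple L_k S_bug deg_r n cases.
set isolated := (forall x y, x \in S -> y \notin S -> ~~ e x y) in cases.
have attached x y : x \in S -> y \notin S -> e x y -> ~ isolated.
  by move=> xS yS xy /(_ x y xS yS); rewrite xy.
have [rS S_conn _] := S_bug.
have deg_le2 := bug_deg_le2 S_bug deg_r.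
have [p [p_uniq p_S p_sorted]] := induced_path_spanning e_simple.1 deg_le2 S_conn rS.
have S_gt0 : 0 < #|S| <= n by rewrite max_card andbT; apply/card_gt0P; exists r.
have small_attached : #|S| <= 2 -> ~ isolated.
  by move/(bug_small_attached e_simple S_bug deg_r)=> [x [y [xS yS]]]; apply: attached.
have [small_bd rotate_ok] := corollary_side_conditions k_ge3 S_gt0 small_attached cases.
have [c0 _] : exists c0, c0 \in L r by apply/card_gt0P; rewrite L_k; lia.
apply: SE_extendable_safe.
apply: (SE_extend_along_path c0 (x0 := r) k_ge3 e_simple L_k p_uniq p_S p_sorted deg_le2);
  rewrite (size_path p_uniq p_S); [by case/andP: S_gt0 | exact: small_bd |].
move=> rho1 r0_max; rewrite /deg_into -lt0n => /card_gt0P[y]; rewrite !inE => /andP[yS pv0y].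
apply: rotate_ok rho1 r0_max (attached _ _ _ yS pv0y).
by rewrite (pv_in r p_S) // (size_path p_uniq p_S); case/andP: S_gt0.
Qed.
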